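(* Let $N \ge 1$ be an integer and $p \in [0,1]$. Let $(K_1, K_2, K_3)$ be a multinomially distributed random vector with $N$ trials and cell probabilities $(1-p)^2$, $2(1-p)p$, $p^2$, i.e. \[ \Pr[K_1=k_1,K_2=k_2,K_3=k_3]=\binom{N}{k_1,k_2,k_3}(1-p)^{2k_1}\bigl(2(1-p)p\bigr)^{k_2}p^{2k_3} \] for nonnegative integers with $k_1+k_2+k_3=N$. Define \[ g(k_1,k_2)=\begin{cases}1 & \text{if } k_1=0 \text{ and } k_2=0,\\ 0 & \text{if } k_1>0 \text{ and } k_2=0,\\ \dfrac{k_2}{2k_1+k_2} & \text{otherwise.}\end{cases} \] Then \[ E[g(K_1,K_2)]=\frac{2N\,(p-p^{2N})}{2N-1}+p^{2N}. \]
   Context: This models $N$ RFID tags read in two independent reader sessions, where each tag is independently unread in each session with probability $p$; $K_1$ is the number of tags read in both sessions, $K_2$ the number read in exactly one session, $K_3$ the number read in neither. The quantity $g(K_1,K_2)$ is the estimator $\hat p$ of $p$. *)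

From mathcomp Require Import all_boot all_order all_algebra.
Set Implicit Arguments. Unset Strict Implicit. Unset Printing Implicit Defensive.
Import Order.TTheory GRing.Theory Num.Theory.
Local Open Scope ring_scope.

Definition multinom (R : fieldType) (N k1 k2 k3 : nat) : R :=
  (N`!)%:R / ((k1`!)%:R * (k2`!)%:R * (k3`!)%:R).

Definition rfid_pmf (R : fieldType) (N : nat) (p : R) (k1 k2 k3 : nat) : R :=
  if (k1 + k2 + k3 == N)%N then
    multinom R N k1 k2 k3 * (1 - p) ^+ (2 * k1) * (2%:R * (1 - p) * p) ^+ k2
      * p ^+ (2 * k3)
  else 0.

Definition g_est (R : fieldType) (k1 k2 : nat) : R :=
  if (k1 == 0%N) && (k2 == 0%N) then 1
  else if (k2 == 0%N) then 0
  else k2%:R / ((2 * k1 + k2)%N)%:R.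

Definition expect_g (R : fieldType) (N : nat) (p : R) : R :=
  \sum_(k1 < N.+1) \sum_(k2 < N.+1) \sum_(k3 < N.+1)
     rfid_pmf N p k1 k2 k3 * g_est R k1 k2.

(** Write [s = 2 K1 + K2] for the total number of successful reads; [g] is
    [K2 / s] away from [s = 0].  Summing out [K3] and grouping by [s], the
    coefficient of [x^s] in [sum_(k1,k2) C(N,k2) C(N-k2,k1) 2^k2 k2 x^(2k1+k2)]
    collects the mass carried by [K2] at level [s]; this generating function is
    [x d/dy (x^2 + 2xy + 1)^N] at [y = 1], i.e. [2N x (x+1)^(2N-2)].  Dividing
    its coefficients by [s] leaves [(2N/(2N-1)) C(2N-1, s)], and the remaining
    sum is the binomial expansion of [(p + (1-p))^(2N-1)] without its [s = 0]
    term. *)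
From mathcomp Require Import all_boot all_order all_algebra.
From mathcomp Require Import ring lra zify.
Import Order.TTheory GRing.Theory Num.Theory.
Local Open Scope ring_scope.

Lemma multinomE (R : numFieldType) (N k1 k2 k3 : nat) :
  (k1 + k2 + k3 = N)%N -> multinom R N k1 k2 k3 = ('C(N, k2) * 'C(N - k2, k1))%:R.
Proof.
move=> sumN; rewrite /multinom.
have factN : (N`! = 'C(N, k2) * 'C(N - k2, k1) * (k1`! * k2`! * k3`!))%N.
  rewrite -(@bin_fact N k2); last lia.
  have -> : (N - k2)`! = ('C(N - k2, k1) * (k1`! * k3`!))%N.
    rewrite -(@bin_fact (N - k2) k1); last lia.
    by have -> : (N - k2 - k1 = k3)%N by lia.
  ring.
rewrite factN -!natrM [X in X / _]natrM mulfK //.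
by rewrite pnatr_eq0 -lt0n !muln_gt0 !fact_gt0.
Qed.

Lemma sum_binomial_widen (R : nzRingType) (x : R) (n N : nat) : (n <= N)%N ->
  \sum_(i < N.+1) x ^+ i *+ 'C(n, i) = (x + 1) ^+ n.
Proof.
move=> le_nN; rewrite exprD1n.
rewrite (big_ord_widen _ (fun i => x ^+ i *+ 'C(n, i)) (_ : n.+1 <= N.+1)%N) //.
rewrite [RHS]big_mkcond /=; apply: eq_bigr => i _.
by case: ifP => // /negbT; rewrite -leqNgt => /bin_small ->.
Qed.

Lemma mixed_generating_sum (R : comNzRingType) (x : R) (M : nat) :
  \sum_(k1 < M.+2) \sum_(k2 < M.+2)
      x ^+ (2 * k1 + k2) *+ ('C(M.+1, k2) * 'C(M.+1 - k2, k1) * 2 ^ k2 * k2)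
    = x *+ 2 *+ M.+1 * (x + 1) ^+ (2 * M).
Proof.
rewrite exchange_big /=.
transitivity (\sum_(k2 < M.+2)
    x ^+ k2 *+ ('C(M.+1, k2) * 2 ^ k2 * k2) * (x ^+ 2 + 1) ^+ (M.+1 - k2)).
  apply: eq_bigr => k2 _.
  rewrite -(@sum_binomial_widen _ (x ^+ 2) (M.+1 - k2) M.+1 (leq_subr _ _)).
  rewrite big_distrr /=; apply: eq_bigr => k1 _.
  rewrite mulrnAr mulrnAl -mulrnA -exprM -exprD addnC.
  by congr (_ *+ _); rewrite -!mulnA; congr (_ * _)%N; rewrite mulnC mulnA.
rewrite big_ord_recl /= muln0 mulr0n mul0r add0r.
have -> : (x + 1) ^+ (2 * M) = ((x ^+ 2 + 1) + x *+ 2) ^+ M.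
  by rewrite exprM sqrrD1 addrAC.
rewrite exprDn big_distrr; apply: eq_bigr => j _ /=.
rewrite /bump /= add1n subSS.
(* [k C(n, k) = n C(n-1, k-1)] absorbs the factor [k2] *)
have absorb : ('C(M.+1, j.+1) * 2 ^ j.+1 * j.+1 = 2 ^ j.+1 * (M.+1 * 'C(M, j)))%N.
  by rewrite (mul_bin_diag M.+1 j) mulnAC mulnC (mulnC 'C(_, _)).
move: (_ ^+ (M - j)) => y; rewrite absorb expnS.
rewrite exprMn_n -mulrnA mulrnAr !mulrnAl mulrnAr -!mulrnA exprS mulrnAr -mulrnA.
congr (_ *+ _); first by rewrite -mulrA (mulrC y).
by move: ('C(M, j)) (2 ^ j)%N => a b; ring.
Qed.

Lemma sum_binomial_div_succ (R : numFieldType) (n : nat) (p q : R) :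
  \sum_(j < n.+1) ('C(n, j))%:R / j.+1%:R * q ^+ j.+1 * p ^+ (n - j)
    = ((p + q) ^+ n.+1 - p ^+ n.+1) / n.+1%:R.
Proof.
rewrite [in RHS]exprDn [in RHS]big_ord_recl /= subn0 expr0 mulr1 bin0 mulr1n.
rewrite addrC addKr mulr_suml; apply: eq_bigr => j _; rewrite /bump /= add1n subSS.
have binS : ('C(n.+1, j.+1))%:R = n.+1%:R * ('C(n, j))%:R / j.+1%:R :> R.
  by rewrite -natrM (mul_bin_diag n.+1 j) natrM mulrC mulKf ?pnatr_eq0.
rewrite -(mulr_natr (_ * _) 'C(n.+1, j.+1)) binS.
by field; rewrite !nat1r !pnatr_eq0.
Qed.

Section Expectation.
Variables (R : numFieldType) (N : nat) (p : R).

Definition cell_count (k1 k2 : nat) : nat := 'C(N, k2) * 'C(N - k2, k1) * 2 ^ k2.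

(* With [s = 2 k1 + k2] successful reads, [g = k2 / s]: the factor [1 / s] is
   kept with the probability weight of [s], the factor [k2] with the count. *)
Definition read_weight (s : nat) : R := (1 - p) ^+ s * p ^+ (2 * N - s) / s%:R.

Lemma cell_count_eq0 (k1 k2 : nat) : (N < k1 + k2)%N -> cell_count k1 k2 = 0%N.
Proof.
move=> lt_Nk12; rewrite /cell_count; have [le_k2N|lt_Nk2] := leqP k2 N.
  by rewrite (@bin_small (N - k2) k1) ?muln0 ?mul0n //; lia.
by rewrite bin_small.
Qed.

Lemma sum_rfid_pmf_K3 (k1 k2 : nat) :
  \sum_(k3 < N.+1) rfid_pmf N p k1 k2 k3
    = (cell_count k1 k2)%:R * (1 - p) ^+ (2 * k1 + k2) * p ^+ (2 * N - (2 * k1 + k2)).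
Proof.
have [le_k12N|lt_Nk12] := leqP (k1 + k2) N; last first.
  rewrite big1 => [|k3 _]; last by rewrite /rfid_pmf ifN //; apply/eqP; lia.
  by rewrite cell_count_eq0 ?mul0r.
have lt_k3 : (N - k1 - k2 < N.+1)%N by lia.
rewrite (bigD1 (Ordinal lt_k3)) //= big1 ?addr0 => [|k3 ne_k3]; last first.
  rewrite /rfid_pmf ifN //; apply: contra ne_k3 => /eqP sumN.
  by apply/eqP/val_inj => /=; lia.
rewrite /rfid_pmf ifT; last by apply/eqP; lia.
rewrite multinomE; last lia.
have -> : (2 * N - (2 * k1 + k2) = 2 * (N - k1 - k2) + k2)%N by lia.
by rewrite /cell_count !exprD !exprMn !natrM !natrX; ring.
Qed.

Lemma cell_mass_mul_g (k1 k2 : nat) :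
  (cell_count k1 k2)%:R * (1 - p) ^+ (2 * k1 + k2) * p ^+ (2 * N - (2 * k1 + k2))
    * g_est R k1 k2
  = (if (k1 == 0%N) && (k2 == 0%N) then p ^+ (2 * N) else 0)
    + (cell_count k1 k2 * k2)%:R * read_weight (2 * k1 + k2).
Proof.
rewrite /g_est /read_weight natrM.
have [->|k1_neq0] := eqVneq k1 0%N; have [->|k2_neq0] := eqVneq k2 0%N => /=.
- have -> : cell_count 0 0 = 1%N by rewrite /cell_count !bin0.
  by rewrite muln0 add0n subn0 expr0 !mulr1 mulr0 mul0r addr0 mul1r.
- by rewrite add0r; ring.
- by rewrite !mulr0 mul0r add0r.
- by rewrite add0r; ring.
Qed.

Lemma expect_gE : expect_g N p = p ^+ (2 * N) +
  \sum_(k1 < N.+1) \sum_(k2 < N.+1)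
     (cell_count k1 k2 * k2)%:R * read_weight (2 * k1 + k2).
Proof.
rewrite /expect_g.
under eq_bigr => k1 _ do under eq_bigr => k2 _ do
  rewrite -big_distrl /= sum_rfid_pmf_K3 cell_mass_mul_g.
rewrite pair_big big_split /=; congr (_ + _); last by rewrite pair_big.
rewrite (bigD1 (ord0, ord0)) //= big1 ?addr0 // => -[k1 k2] /= ne00.
case: eqP => [k1_0|] //=; case: eqP => [k2_0|] //.
by case/eqP: ne00; congr pair; apply: val_inj.
Qed.

Definition read_sum (P : {poly R}) : R :=
  \sum_(s < (2 * N).+1) P`_s * read_weight s.

Lemma read_sum_sum (I : Type) (r : seq I) (P : pred I) (F : I -> {poly R}) :
  read_sum (\sum_(i <- r | P i) F i) = \sum_(i <- r | P i) read_sum (F i).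
Proof.
rewrite /read_sum; under eq_bigr do rewrite coef_sum big_distrl /=.
exact: exchange_big.
Qed.

Lemma read_sum_XnMn (e n : nat) : (e <= 2 * N)%N ->
  read_sum ('X^e *+ n) = n%:R * read_weight e.
Proof.
move=> le_e; rewrite /read_sum.
rewrite (bigD1 (Ordinal (le_e : (e < (2 * N).+1)%N))) //= big1 ?addr0 => [|s ne_s].
  by rewrite coefMn coefXn eqxx mulr1n mulr_natl.
rewrite coefMn coefXn.
have /negbTE -> : (s : nat) != e by apply: contra ne_s => /eqP eq_s; apply/eqP/val_inj.
by rewrite mul0rn mul0r.
Qed.

Lemma sum_cell_read_weight :
  \sum_(k1 < N.+1) \sum_(k2 < N.+1)
     (cell_count k1 k2 * k2)%:R * read_weight (2 * k1 + k2)
    = read_sum (\sum_(k1 < N.+1) \sum_(k2 < N.+1)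
         'X^(2 * k1 + k2) *+ (cell_count k1 k2 * k2)).
Proof.
rewrite read_sum_sum; apply: eq_bigr => k1 _.
rewrite read_sum_sum; apply: eq_bigr => k2 _.
have [le_k12N|lt_Nk12] := leqP (k1 + k2) N; first by rewrite read_sum_XnMn //; lia.
rewrite cell_count_eq0 // mul0n mulr0n mul0r /read_sum big1 // => s _.
by rewrite coef0 mul0r.
Qed.

Lemma read_sum_X_mul_X1 (n m : nat) : (m < 2 * N)%N ->
  read_sum ('X *+ n * ('X + 1) ^+ m)
    = \sum_(j < m.+1) (n * 'C(m, j))%:R * read_weight j.+1.
Proof.
move=> lt_m2N; rewrite exprD1n big_distrr read_sum_sum; apply: eq_bigr => j _.
rewrite /= [in LHS]mulrnAr [in LHS]mulrnAl -mulrnA -exprS read_sum_XnMn //.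
by have := ltn_ord j; lia.
Qed.

End Expectation.

Theorem lemma1 (R : realFieldType) (N : nat) (p : R) :
  (1 <= N)%N -> 0 <= p -> p <= 1 ->
  expect_g N p =
    (2 * N)%N%:R * (p - p ^+ (2 * N)) / ((2 * N)%N%:R - 1) + p ^+ (2 * N).
Proof.
case: N => [//|M] _ _ _.
rewrite expect_gE sum_cell_read_weight /cell_count (mixed_generating_sum _ 'X M).
rewrite -mulrnA read_sum_X_mul_X1; last by lia.
have termE (j : 'I_(2 * M).+1) :
    (2 * M.+1 * 'C(2 * M, j))%:R * read_weight _ M.+1 p j.+1
  = (2 * M.+1)%:R * p *
      ('C(2 * M, j)%:R / j.+1%:R * (1 - p) ^+ j.+1 * p ^+ (2 * M - j)).
  rewrite /read_weight; have -> : (2 * M.+1 - j.+1 = (2 * M - j).+1)%N.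
    by have := ltn_ord j; lia.
  by rewrite [p ^+ _.+1]exprS natrM; ring.
rewrite (eq_bigr _ (fun j _ => termE j)) -mulr_sumr sum_binomial_div_succ.
rewrite subrKC expr1n.
have -> : (2 * M.+1 = (2 * M).+2)%N by lia.
rewrite -[(2 * M).+2%:R]natr1 addrK exprS.
by field; apply: lt0r_neq0; have := ler0n R M; lra.
Qed.
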